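(* For $n\in\mathbb N$ let $\mu_n=\{p/n:p\in\mathbb Z,\ |p/n|\le n\}$, and let $\Lambda_{\mathbb Q}=\{\mu_{m!}:m\in\mathbb N\}$. Let $I$ be a fine ideal of $\mathfrak F(\mathcal P_{fin}(\mathbb Q),\mathbb R)$ containing $I_{0,\Lambda_{\mathbb Q}}$ and let $P$ be the probability of the NAP-space produced by $(\mathbb Q,1,I)$. Then for all rationals $a<b$, $$P([a,b)_{\mathbb Q})=(b-a)\,P([0,1)_{\mathbb Q}),$$ equivalently $\mathfrak n([a,b)_{\mathbb Q})=(b-a)\,\mathfrak n([0,1)_{\mathbb Q})$; consequently, for rationals with $[a_0,b_0)_{\mathbb Q}\subseteq[a_1,b_1)_{\mathbb Q}$, $a_0<b_0$, $a_1<b_1$, one has $P([a_0,b_0)_{\mathbb Q}\mid[a_1,b_1)_{\mathbb Q})=\dfrac{b_0-a_0}{b_1-a_1}$.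
   Context: $[a,b)_{\mathbb Q}=\{x\in\mathbb Q:a\le x<b\}$. $\mathcal P_{fin}(\Omega)$ is the set of finite subsets of $\Omega$ and $\mathfrak F=\mathfrak F(\mathcal P_{fin}(\Omega),\mathbb R)$ the real algebra of functions $\mathcal P_{fin}(\Omega)\to\mathbb R$ with pointwise operations. For $\omega\in\Omega$, $\chi_\lambda(\omega)=1$ if $\omega\in\lambda$, else $0$. An ideal $I$ of $\mathfrak F$ is fine if it is maximal and $\lambda\mapsto 1-\chi_\lambda(\omega)$ lies in $I$ for every $\omega\in\Omega$. For $\Lambda\subseteq\mathcal P_{fin}(\Omega)$, $I_{0,\Lambda}=\{\varphi\in\mathfrak F:\varphi(\lambda)=0\text{ for all }\lambda\in\Lambda\}$. The NAP-space produced by $(\Omega,w,I)$ ($w:\Omega\to\mathbb R^+$, $I$ fine) has range field $\mathfrak F/I$, $J$ the canonical projection $\varphi\mapsto\varphi+I$, and $P(A)=J\big(\lambda\mapsto\sum_{\omega\in A\cap\lambda}w(\omega)\big)/J\big(\lambda\mapsto\sum_{\omega\in\lambda}w(\omega)\big)$; conditional probability is $P(A\mid B)=P(A\cap B)/P(B)$. For constant weight $w\equiv1$ (a fair space), the numerosity of $A$ is $\mathfrak n(A)=P(A)/P(\{\omega\})$ for any $\omega\in\Omega$, equivalently $\mathfrak n(A)=J(\lambda\mapsto|A\cap\lambda|)$. *)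

From Stdlib Require Import Reals.
From mathcomp Require Import all_boot all_order all_algebra.
Set Implicit Arguments. Unset Strict Implicit. Unset Printing Implicit Defensive.

Definition R_of_int (z : int) : R :=
  match z with Posz n => INR n | Negz n => Ropp (INR (S n)) end.
Definition R_of_rat (q : rat) : R := Rdiv (R_of_int (numq q)) (R_of_int (denq q)).

(* ---------- P_fin(Q): finite subsets of Q, canonically represented as
   strictly increasing sequences (so equal sets = equal elements) ---------- *)
Definition Pfin : Type := {s : seq rat | sorted (fun x y : rat => (x < y)%R) s}.
Definition memPfin (l : Pfin) (q : rat) : bool := q \in sval l.

Definition Ffun : Type := Pfin -> R.
Definition fconst (c : R) : Ffun := fun _ => c.
Definition fadd (f g : Ffun) : Ffun := fun l => Rplus (f l) (g l).
Definition fopp (f : Ffun) : Ffun := fun l => Ropp (f l).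
Definition fsub (f g : Ffun) : Ffun := fun l => Rminus (f l) (g l).
Definition fmul (f g : Ffun) : Ffun := fun l => Rmult (f l) (g l).
(* pointwise inverse (Stdlib: / 0 = 0, lemma Rinv_0) *)
Definition finv (f : Ffun) : Ffun := fun l => Rinv (f l).

Definition is_ideal (I : Ffun -> Prop) : Prop :=
  I (fconst R0) /\
  (forall f g, I f -> I g -> I (fadd f g)) /\
  (forall f g, I g -> I (fmul f g)).

Definition is_maximal_ideal (I : Ffun -> Prop) : Prop :=
  is_ideal I /\ ~ I (fconst R1) /\
  (forall J : Ffun -> Prop, is_ideal J -> (forall f, I f -> J f) ->
     (forall f, J f -> I f) \/ J (fconst R1)).

Definition chi (w : rat) : Ffun := fun l => if memPfin l w then R1 else R0.

Definition fine_ideal (I : Ffun -> Prop) : Prop :=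
  is_maximal_ideal I /\ (forall w : rat, I (fsub (fconst R1) (chi w))).

Definition I0 (Lam : Pfin -> Prop) (f : Ffun) : Prop := forall l, Lam l -> f l = R0.

Definition in_mu (n : nat) (q : rat) : Prop :=
  exists p : int, q = (p%:~R / n%:R)%R /\ (`|q| <= n%:R)%R.
Definition LambdaQ (l : Pfin) : Prop :=
  exists m : nat, forall q : rat, memPfin l q <-> in_mu (m `!) q.

(* ---------- the quotient field F/I, as the setoid F modulo I:
   J f = J g  in F/I   iff   f - g in I.  Field operations are computed on
   representatives; the inverse of a nonzero class J f is J (finv f). ---------- *)
Definition Jeq (I : Ffun -> Prop) (f g : Ffun) : Prop := I (fsub f g).
Definition qdiv (f g : Ffun) : Ffun := fmul f (finv g).

Definition wsum (w : rat -> R) (A : rat -> bool) (l : Pfin) : R :=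
  foldr Rplus R0 (map w (filter A (sval l))).

(* P(A) = J(l |-> sum_{A cap l} w) / J(l |-> sum_l w), a representative in F *)
Definition NAP_P (w : rat -> R) (A : rat -> bool) : Ffun :=
  qdiv (wsum w A) (wsum w (fun _ => true)).

Definition NAP_Pcond (w : rat -> R) (A B : rat -> bool) : Ffun :=
  qdiv (NAP_P w (fun x => A x && B x)) (NAP_P w B).

Definition w1 : rat -> R := fun _ => R1.

Definition numerosity (A : rat -> bool) : Ffun :=
  fun l => INR (size (filter A (sval l))).

Definition ivQ (a b : rat) : rat -> bool := fun x => ((a <= x) && (x < b))%R.

From Pilot Require Import Defs.
From Stdlib Require Import Reals FunctionalExtensionality.
From mathcomp Require Import all_boot all_order all_algebra.
From mathcomp Require Import Rstruct zify.

(* Write N = m! and let l be the grid mu_N = { p/N : |p| <= N*N }.  Once m is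
   larger than the numerators and denominators of rationals a <= b, both a and b
   lie on the grid, a = A/N and b = B/N with |A|, |B| <= N*N, so [a,b) contains
   exactly the B - A grid points (A+i)/N, i < B - A; that is
        |[a,b)_Q ∩ mu_{m!}| = (b - a) * m!        for all m large enough.
   On the ideal side, a function that vanishes on mu_{m!} for all large m lies
   in I: splitting it with the indicator of a rational w outside the early grids,
   one part vanishes on all of Lambda_Q (so is in I_{0,Lambda_Q} ⊆ I) and the
   other is a multiple of 1 - chi_w, which is in I since I is fine.
   The file first develops the grid arithmetic, then the eventual counting
   formula, then the ideal-theoretic lemma, and finally derives the three claims
   of the theorem by comparing representatives on the sets mu_{m!}. *)

Import Order.TTheory GRing.Theory Num.Theory.

Section GridCounting.
Local Open Scope ring_scope.

Variable N : nat.
Hypothesis N_gt0 : (0 < N)%N.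

Let N_neq0 : (N%:R : rat) != 0.
Proof. by rewrite pnatr_eq0 -lt0n. Qed.

Lemma grid_le (p q : int) : ((p%:~R / N%:R : rat) <= q%:~R / N%:R) = (p <= q).
Proof. by rewrite ler_pM2r ?ler_int // invr_gt0 ltr0n. Qed.

Lemma grid_lt (p q : int) : ((p%:~R / N%:R : rat) < q%:~R / N%:R) = (p < q).
Proof. by rewrite ltr_pM2r ?ltr_int // invr_gt0 ltr0n. Qed.

Lemma in_mu_gridE (p : int) :
  in_mu N (p%:~R / N%:R) <-> `|p| <= (N * N)%N%:Z.
Proof.
have norm_grid : (`|(p%:~R / N%:R : rat)| <= N%:R) = (`|p| <= (N * N)%N%:Z).
  rewrite normrM normfV [`|N%:R|]ger0_norm ?ler0n // ler_pdivrMr ?ltr0n //.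
  by rewrite -intr_norm -natrM -[(N * N)%N%:R]/(((N * N)%N%:Z)%:~R) ler_int.
split; first by case=> _ [_]; rewrite norm_grid.
by move=> Hp; exists p; rewrite norm_grid.
Qed.

Lemma count_grid_interval (s : seq rat) (A B : int) :
  uniq s -> (forall q, q \in s <-> in_mu N q) -> A <= B ->
  `|A| <= (N * N)%N%:Z -> `|B| <= (N * N)%N%:Z ->
  size (filter (ivQ (A%:~R / N%:R) (B%:~R / N%:R)) s) = `|B - A|%N.
Proof.
move=> s_uniq s_mu AB A_bound B_bound.
pose pts := map (fun i : nat => (A + i%:Z)%:~R / (N%:R : rat)) (iota 0 `|B - A|).
have pts_uniq : uniq pts.
  rewrite map_inj_uniq ?iota_uniq // => i j /= /(mulIf (invr_neq0 N_neq0)).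
  by move/eqP; rewrite eqr_int => /eqP; lia.
have -> : `|B - A|%N = size pts by rewrite size_map size_iota.
apply: perm_size; apply: uniq_perm; [exact: filter_uniq | exact: pts_uniq |].
move=> x; rewrite mem_filter /ivQ; apply/idP/idP.
  case/andP=> /andP [ax xb] /s_mu [p [x_def _]].
  rewrite x_def grid_le in ax; rewrite x_def grid_lt in xb.
  apply/mapP; exists `|p - A|%N; first by rewrite mem_iota; lia.
  by rewrite x_def; congr (_%:~R / _); lia.
case/mapP=> i; rewrite mem_iota => /andP [_ i_lt] ->.
rewrite grid_le grid_lt; apply/andP; split; first by apply/andP; split; lia.
by apply/s_mu/in_mu_gridE; lia.
Qed.

End GridCounting.

Section EventualCount.
Local Open Scope ring_scope.

Definition eventually (P : nat -> Prop) : Prop :=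
  exists M, forall m, (M <= m)%N -> P m.

Lemma eventually2 {P Q S : nat -> Prop} :
  eventually P -> eventually Q -> (forall m, P m -> Q m -> S m) -> eventually S.
Proof.
move=> [M1 HP] [M2 HQ] PQS; exists (maxn M1 M2) => m.
by rewrite geq_max => /andP [m1 m2]; apply: PQS; [apply: HP | apply: HQ].
Qed.

Definition is_mu_fact (m : nat) (l : Pfin) : Prop :=
  forall q, memPfin l q <-> in_mu m`! q.

Lemma on_fact_grid (m : nat) (c : rat) :
  (`|denq c| <= m)%N -> (`|numq c| <= m)%N ->
  exists C : int, c = C%:~R / (m`!)%:R /\ `|C| <= (m`! * m`!)%N%:Z.
Proof.
move=> den_le num_le.
have den_gt0 : (0 < `|denq c|)%N by rewrite absz_gt0 denq_neq0.
have den_dvd : (`|denq c| %| m`!)%N by apply: dvdn_fact; rewrite den_gt0.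
set k := (m`! %/ `|denq c|)%N.
have fact_eq : m`! = (k * `|denq c|)%N by rewrite divnK.
have k_neq0 : (k%:R : rat) != 0.
  by rewrite pnatr_eq0; apply/eqP => k0; move: (fact_gt0 m); rewrite fact_eq k0.
exists (numq c * k%:Z); split.
  rewrite -{1}(divq_num_den c) -[denq c]gez0_abs ?ltW ?denq_gt0 // fact_eq.
  by rewrite natrM intrM -[((k%:Z)%:~R : rat)]/(k%:R) invfM mulrA mulfK.
have := leq_mul (leq_trans num_le (fact_geq m)) (leq_div m`! `|denq c|); nia.
Qed.

Lemma R_of_ratE (q : rat) : R_of_rat q = ratr q.
Proof.
have R_of_intE (z : int) : R_of_int z = z%:~R by case: z => n; rewrite /R_of_int INRE.
by rewrite /R_of_rat RdivE !R_of_intE.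
Qed.

Lemma count_interval_eventually {a b : rat} : a <= b ->
  eventually (fun m => forall l, is_mu_fact m l ->
    INR (size (filter (ivQ a b) (sval l))) = Rmult (R_of_rat (b - a)) (INR m`!)).
Proof.
move=> ab; exists (`|denq a| + `|denq b| + `|numq a| + `|numq b|)%N.
move=> m m_large l l_mu.
have N_gt0 := fact_gt0 m.
have [A [a_def A_bound]] := @on_fact_grid m a ltac:(lia) ltac:(lia).
have [B [b_def B_bound]] := @on_fact_grid m b ltac:(lia) ltac:(lia).
have AB : A <= B by rewrite -(grid_le _ N_gt0) -a_def -b_def.
have l_uniq : uniq (sval l) := lt_sorted_uniq (proj2_sig l).
rewrite a_def b_def count_grid_interval //.
rewrite R_of_ratE RmultE !INRE -mulrBl -intrB fmorph_div rmorph_int rmorph_nat.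
rewrite mulfVK ?pnatr_eq0 -?lt0n // -[(`|B - A|%N%:R : R)]/((`|B - A|%N%:Z)%:~R).
by congr (_%:~R); lia.
Qed.

End EventualCount.

Lemma nat_notin_mu (n k : nat) : (n < k)%N -> ~ in_mu n (k%:R)%R.
Proof. by move=> nk [p [_]]; rewrite ger0_norm ?ler0n // ler_nat; lia. Qed.

Lemma Jeq_eventually (I : Ffun -> Prop) : fine_ideal I ->
  (forall f, I0 LambdaQ f -> I f) ->
  forall f g : Ffun,
    eventually (fun m => forall l, is_mu_fact m l -> f l = g l) -> Jeq I f g.
Proof.
move=> [[[_ [I_add I_mul]] _] I_fine] I0_sub f g [M fg_eq].
set h := fsub f g; set w : rat := ((M`!).+1%:R)%R.
have h_split : h = fadd (fmul h (chi w)) (fmul h (fsub (fconst R1) (chi w))).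
  by apply: functional_extensionality => l; rewrite /fadd /fmul /fsub /fconst; ring.
rewrite /Jeq -/h h_split; apply: I_add; last exact: I_mul.
apply: I0_sub => l [m l_mu]; rewrite /fmul.
case: (ltnP m M) => [m_small | m_large]; last first.
  by rewrite /h /fsub (fg_eq m m_large l l_mu) Rminus_diag_eq ?Rmult_0_l.
have w_notin : ~~ memPfin l w.
  apply/negP => /l_mu; apply: nat_notin_mu.
  by rewrite ltnS leq_fact // ltnW.
by rewrite /chi (negbTE w_notin) Rmult_0_r.
Qed.

Lemma wsum_w1 (A : rat -> bool) (l : Pfin) :
  wsum w1 A l = INR (size (filter A (sval l))).
Proof.
rewrite /wsum; elim: (filter A (sval l)) => // x s IH.
by rewrite [size _]/= S_INR -IH /w1 Rplus_comm.
Qed.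

(* Every mu_{m!} contains 0, so the total weight of l is nonzero. *)
Lemma mu_fact_size_neq0 (m : nat) (l : Pfin) : is_mu_fact m l ->
  INR (size (filter (fun _ => true) (sval l))) <> R0.
Proof.
move=> l_mu; apply: not_0_INR; rewrite filter_predT.
have : memPfin l 0 by apply/l_mu; exists 0; rewrite mul0r normr0 ler0n.
by rewrite /memPfin; case: (sval l).
Qed.

Theorem mainTheorem15 :
  forall I : Ffun -> Prop,
    fine_ideal I ->
    (forall f, I0 LambdaQ f -> I f) ->
    (forall a b : rat, (a < b)%R ->
       Jeq I (NAP_P w1 (ivQ a b))
             (fmul (fconst (R_of_rat (b - a)%R)) (NAP_P w1 (ivQ 0%R 1%R))))
    /\
    (forall a b : rat, (a < b)%R ->
       Jeq I (numerosity (ivQ a b))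
             (fmul (fconst (R_of_rat (b - a)%R)) (numerosity (ivQ 0%R 1%R))))
    /\
    (forall a0 b0 a1 b1 : rat, (a0 < b0)%R -> (a1 < b1)%R ->
       (forall x : rat, ivQ a0 b0 x -> ivQ a1 b1 x) ->
       Jeq I (NAP_Pcond w1 (ivQ a0 b0) (ivQ a1 b1))
             (fconst (R_of_rat ((b0 - a0) / (b1 - a1))%R))).
Proof.
move=> I I_fine I0_sub.
have count01 := count_interval_eventually (@ler01 rat).
have unit_len : R_of_rat (1 - 0) = R1 by rewrite R_of_ratE subr0 rmorph1.
split; [|split].
- move=> a b /ltW /count_interval_eventually count_ab.
  apply: Jeq_eventually => //.
  apply: (eventually2 count_ab count01) => m E_ab E_01 l l_mu.
  rewrite /NAP_P /qdiv /fmul /Defs.finv /fconst !wsum_w1.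
  rewrite (E_ab l l_mu) (E_01 l l_mu) unit_len; ring.
- move=> a b /ltW /count_interval_eventually count_ab.
  apply: Jeq_eventually => //.
  apply: (eventually2 count_ab count01) => m E_ab E_01 l l_mu.
  rewrite /numerosity /fmul /fconst (E_ab l l_mu) (E_01 l l_mu) unit_len; ring.
- move=> a0 b0 a1 b1 ab0 ab1 sub.
  have count0 := count_interval_eventually (ltW ab0).
  have count1 := count_interval_eventually (ltW ab1).
  apply: Jeq_eventually => //; apply: (eventually2 count0 count1) => m E0 E1 l l_mu.
  have inter_eq : filter (fun x => ivQ a0 b0 x && ivQ a1 b1 x) (sval l)
                  = filter (ivQ a0 b0) (sval l).
    by apply: eq_filter => x; case x0: (ivQ a0 b0 x); rewrite //= sub.
  have len1_neq0 : R_of_rat (b1 - a1) <> R0.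
    rewrite R_of_ratE => /eqP; rewrite fmorph_eq0 subr_eq0 => /eqP b1_eq.
    by rewrite b1_eq ltxx in ab1.
  have fact_neq0 : INR m`! <> R0 by apply/not_0_INR/eqP; rewrite -lt0n fact_gt0.
  have size_neq0 := @mu_fact_size_neq0 m l l_mu.
  rewrite /NAP_Pcond /NAP_P /qdiv /fmul /Defs.finv /fconst !wsum_w1 inter_eq.
  rewrite (E0 l l_mu) (E1 l l_mu).
  have ratio_eq : R_of_rat ((b0 - a0) / (b1 - a1))
                 = Rmult (R_of_rat (b0 - a0)) (Rinv (R_of_rat (b1 - a1))).
    by rewrite !R_of_ratE fmorph_div.
  rewrite ratio_eq; field; repeat split; assumption.
Qed.
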